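(* Let $(X,d)$ be a $\delta$-hyperbolic geodesic metric space, $\delta\ge0$. Then for all $x,y\in X$ and $s,t\ge0$, the set $B(x,s)\cap B(y,t)$ has eccentricity at most $2\delta$; and if it is nonempty, there are $c\in X$, $r\ge 0$ with $d_H(B(x,s)\cap B(y,t),B(c,r))\le 2\delta$.
   Context: $B(x,r)=\{z\in X: d(x,z)\le r\}$ denotes the closed ball. A set $S\subseteq X$ has eccentricity at most $\delta$ if $S=\emptyset$ or there exist $R\ge 0$ and $c,c'\in X$ with $B(c,R)\subseteq S\subseteq B(c',R+\delta)$. $d_H$ is Hausdorff distance. A geodesic metric space is $\delta$-hyperbolic if for every geodesic triangle each side is contained in the $\delta$-neighbourhood of the union of the other two sides. *)

From Stdlib Require Import Reals Lra.
Open Scope R_scope.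

Record MetricSpace := {
  mcarrier :> Type;
  mdist : mcarrier -> mcarrier -> R;
  mdist_refl : forall x, mdist x x = 0;
  mdist_eq : forall x y, mdist x y = 0 -> x = y;
  mdist_sym : forall x y, mdist x y = mdist y x;
  mdist_tri : forall x y z, mdist x z <= mdist x y + mdist y z
}.

Section Defs.
Variable X : MetricSpace.
Notation d := (mdist X).

Definition cball (x : X) (r : R) : X -> Prop := fun z => d x z <= r.

Definition inter (A B : X -> Prop) : X -> Prop := fun z => A z /\ B z.
Definition union (A B : X -> Prop) : X -> Prop := fun z => A z \/ B z.
Definition subset (A B : X -> Prop) : Prop := forall z, A z -> B z.
Definition is_empty (A : X -> Prop) : Prop := forall z, ~ A z.

Definition geodesic_path (x y : X) (g : R -> X) : Prop :=
  g 0 = x /\ g (d x y) = y /\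
  forall s t, 0 <= s <= d x y -> 0 <= t <= d x y ->
    d (g s) (g t) = Rabs (s - t).

Definition geodesic_segment (x y : X) (S : X -> Prop) : Prop :=
  exists g, geodesic_path x y g /\
    forall z, S z <-> exists t, 0 <= t <= d x y /\ g t = z.

Definition geodesic_space : Prop :=
  forall x y : X, exists g, geodesic_path x y g.

Definition nbhd (A : X -> Prop) (r : R) : X -> Prop :=
  fun z => exists a, A a /\ d z a <= r.

Definition delta_hyperbolic (delta : R) : Prop :=
  geodesic_space /\
  forall (x y z : X) (Sxy Syz Szx : X -> Prop),
    geodesic_segment x y Sxy -> geodesic_segment y z Syz ->
    geodesic_segment z x Szx ->
    subset Sxy (nbhd (union Syz Szx) delta) /\
    subset Syz (nbhd (union Szx Sxy) delta) /\
    subset Szx (nbhd (union Sxy Syz) delta).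

Definition ecc_le (S : X -> Prop) (delta : R) : Prop :=
  is_empty S \/
  exists (R0 : R) (c c' : X), 0 <= R0 /\
    subset (cball c R0) S /\ subset S (cball c' (R0 + delta)).

(* d(z, A) <= r, where d(z,A) = inf_{a in A} d(z,a) *)
Definition dist_set_le (z : X) (A : X -> Prop) (r : R) : Prop :=
  forall eps, 0 < eps -> exists a, A a /\ d z a < r + eps.

Definition hausdorff_le (A B : X -> Prop) (r : R) : Prop :=
  (forall a, A a -> dist_set_le a B r) /\ (forall b, B b -> dist_set_le b A r).

End Defs.

(* In a delta-hyperbolic space, the point m of a geodesic [x,y] at distance
   (d(x,y) + s - t)/2 from x is the centre of a ball of radius r = (s + t - d(x,y))/2
   contained in B(x,s) ∩ B(y,t).  Conversely, for z in the intersection, the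
   triangle (x, y, z) is delta-slim, so m is delta-close to a point of [y,z] or
   [z,x]; following that side to z gives d(m,z) <= r + 2 delta.  A ball squeezed
   between B(m,r) and B(m,r+2delta) is within Hausdorff distance 2 delta of B(m,r),
   since geodesics from m reach B(m,r) after travelling the excess distance. *)

From Stdlib Require Import Reals Lra.
Open Scope R_scope.

Section HyperbolicBalls.

Variable X : MetricSpace.
Notation d := (mdist X).

Lemma geodesic_path_dist (x y : X) (g : R -> X) (a : R) :
  geodesic_path X x y g -> 0 <= a <= d x y ->
  d x (g a) = a /\ d (g a) y = d x y - a.
Proof.
  intros [Hg0 [Hg1 Hiso]] Ha.
  pose proof (Hiso 0 a) as H0a. pose proof (Hiso a (d x y)) as Hay.
  rewrite Hg0 in H0a. rewrite Hg1 in Hay.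
  rewrite H0a, Hay, !Rabs_left1 by lra. split; lra.
Qed.

Lemma geodesic_segment_image (x y : X) (g : R -> X) :
  geodesic_path X x y g ->
  geodesic_segment X x y (fun w => exists u, 0 <= u <= d x y /\ g u = w).
Proof. intros Hg. exists g. split; [exact Hg | tauto]. Qed.

(* Slimness puts g a within delta of [y,z] or [z,x]; the two terms of the max
   come from walking along that side to z. *)
Lemma hyperbolic_geodesic_dist_le (delta : R) (x y z : X) (g : R -> X) (a : R) :
  delta_hyperbolic X delta -> geodesic_path X x y g -> 0 <= a <= d x y ->
  d (g a) z <= Rmax (d y z - (d x y - a)) (d x z - a) + 2 * delta.
Proof.
  intros [Hgeo Hslim] Hg Ha.
  destruct (geodesic_path_dist x y g a Hg Ha) as [Hxm Hmy].
  destruct (Hgeo y z) as [g1 Hg1]. destruct (Hgeo z x) as [g2 Hg2].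
  destruct (Hslim x y z _ _ _ (geodesic_segment_image x y g Hg)
              (geodesic_segment_image y z g1 Hg1)
              (geodesic_segment_image z x g2 Hg2)) as [Hside _].
  destruct (Hside (g a)) as [w [[[u [Hu <-]] | [u [Hu <-]]] Hmw]];
    [exists a; split; [exact Ha | reflexivity] | |].
  - destruct (geodesic_path_dist y z g1 u Hg1 Hu) as [Hyw Hwz].
    pose proof (mdist_tri X (g a) (g1 u) z).
    pose proof (mdist_tri X (g a) (g1 u) y).
    rewrite (mdist_sym X (g1 u) y) in *.
    pose proof (Rmax_l (d y z - (d x y - a)) (d x z - a)). lra.
  - destruct (geodesic_path_dist z x g2 u Hg2 Hu) as [Hzw Hwx].
    pose proof (mdist_tri X (g a) (g2 u) z).
    pose proof (mdist_tri X (g a) (g2 u) x).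
    rewrite (mdist_sym X (g2 u) z), (mdist_sym X (g a) x), (mdist_sym X z x) in *.
    pose proof (Rmax_r (d y z - (d x y - a)) (d x z - a)). lra.
Qed.

Lemma cball_subset_cball (x y : X) (s t : R) :
  d x y + t <= s -> subset X (cball X y t) (cball X x s).
Proof.
  intros Hst z Hz. unfold cball in *.
  pose proof (mdist_tri X x y z). lra.
Qed.

Lemma cball_inter_empty (x y : X) (s t : R) :
  s + t < d x y -> is_empty X (inter X (cball X x s) (cball X y t)).
Proof.
  intros Hst z [Hx Hy]. unfold cball in *.
  pose proof (mdist_tri X x z y). rewrite (mdist_sym X z y) in *. lra.
Qed.

Definition ball_sandwich (S : X -> Prop) (c : X) (r e : R) : Prop :=
  0 <= r /\ subset X (cball X c r) S /\ subset X S (cball X c (r + e)).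

Lemma cball_inter_sandwich (delta : R) (x y : X) (s t : R) :
  0 <= delta -> delta_hyperbolic X delta -> 0 <= s -> 0 <= t ->
  d x y <= s + t ->
  exists c r, ball_sandwich (inter X (cball X x s) (cball X y t)) c r (2 * delta).
Proof.
  intros Hd Hh Hs Ht Hxy.
  destruct (Rle_dec (d x y + t) s) as [Hy_in | Hy_out].
  { exists y, t. split; [exact Ht | split].
    - intros z Hz. split; [exact (cball_subset_cball x y s t Hy_in z Hz) | exact Hz].
    - intros z [_ Hz]. unfold cball in *. lra. }
  destruct (Rle_dec (d x y + s) t) as [Hx_in | Hx_out].
  { rewrite (mdist_sym X x y) in Hx_in.
    exists x, s. split; [exact Hs | split].
    - intros z Hz. split; [exact Hz | exact (cball_subset_cball y x t s Hx_in z Hz)].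
    - intros z [Hz _]. unfold cball in *. lra. }
  destruct (proj1 Hh x y) as [g Hg].
  set (a := (d x y + s - t) / 2).
  assert (Ha : 0 <= a <= d x y) by (unfold a; lra).
  destruct (geodesic_path_dist x y g a Hg Ha) as [Hxm Hmy].
  exists (g a), ((s + t - d x y) / 2). split; [lra | split].
  - intros z Hz. unfold cball in *. split.
    + pose proof (mdist_tri X x (g a) z). unfold a in *. lra.
    + pose proof (mdist_tri X y (g a) z).
      rewrite (mdist_sym X y (g a)) in *. unfold a in *. lra.
  - intros z [Hxz Hyz]. unfold cball in *.
    pose proof (hyperbolic_geodesic_dist_le delta x y z g a Hh Hg Ha) as Hmz.
    assert (Hmax : Rmax (d y z - (d x y - a)) (d x z - a) <= (s + t - d x y) / 2)
      by (apply Rmax_lub; unfold a; lra).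
    lra.
Qed.

Lemma cball_near (c z : X) (r e : R) :
  geodesic_space X -> 0 <= r -> 0 <= e -> d c z <= r + e ->
  exists w, d c w <= r /\ d z w <= e.
Proof.
  intros Hgeo Hr He Hz.
  destruct (Rle_dec (d c z) r) as [Hin | Hout].
  { exists z. rewrite mdist_refl. split; lra. }
  destruct (Hgeo c z) as [h Hh].
  destruct (geodesic_path_dist c z h r Hh) as [Hcw Hwz]; [lra |].
  exists (h r). rewrite (mdist_sym X z (h r)). split; lra.
Qed.

Lemma hausdorff_le_ball_sandwich (S : X -> Prop) (c : X) (r e : R) :
  geodesic_space X -> 0 <= e -> ball_sandwich S c r e ->
  hausdorff_le X S (cball X c r) e.
Proof.
  intros Hgeo He [Hr [Hin Hout]]. split.
  - intros z Hz eps Heps.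
    destruct (cball_near c z r e Hgeo Hr He (Hout z Hz)) as [w [Hw Hzw]].
    exists w. split; [exact Hw | lra].
  - intros z Hz eps Heps.
    exists z. rewrite mdist_refl. split; [exact (Hin z Hz) | lra].
Qed.

End HyperbolicBalls.

Theorem proposition3p2 (X : MetricSpace) (delta : R) :
  0 <= delta -> delta_hyperbolic X delta ->
  forall (x y : X) (s t : R), 0 <= s -> 0 <= t ->
    ecc_le X (inter X (cball X x s) (cball X y t)) (2 * delta) /\
    ((exists z, inter X (cball X x s) (cball X y t) z) ->
     exists (c : X) (r : R), 0 <= r /\
       hausdorff_le X (inter X (cball X x s) (cball X y t)) (cball X c r) (2 * delta)).
Proof.
  intros Hd Hh x y s t Hs Ht.
  destruct (Rle_dec (mdist X x y) (s + t)) as [Hmeet | Hapart].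
  - destruct (cball_inter_sandwich X delta x y s t Hd Hh Hs Ht Hmeet)
      as [c [r Hsand]].
    split.
    + right. destruct Hsand as [Hr [Hin Hout]]. exists r, c, c. auto.
    + intros _. exists c, r. split; [exact (proj1 Hsand) |].
      apply hausdorff_le_ball_sandwich; [exact (proj1 Hh) | lra | exact Hsand].
  - assert (Hempty := cball_inter_empty X x y s t (Rnot_le_lt _ _ Hapart)).
    split; [left; exact Hempty |].
    intros [z Hz]. destruct (Hempty z Hz).
Qed.
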